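(* Let $\mathbf v\in\mathbb R_{<0}^{n\times m}$. For every Pareto optimal utility profile $\mathbf u\in\mathcal U^*(\mathbf v)$ there exists an allocation $\mathbf z$ with $\mathbf u(\mathbf z)=\mathbf u$ and $G_{\mathbf z}\in\mathrm{MWW}(\mathbf v)$. Consequently, for every $\mathbf b\in\mathbb R^n_{<0}$ and every competitive utility profile $\mathbf u\in\mathrm{CU}(\mathbf v,\mathbf b)$ there is a competitive allocation $\mathbf z$ with $\mathbf u(\mathbf z)=\mathbf u$ and $G_{\mathbf z}\in\mathrm{MWW}(\mathbf v)$.
   Context: Setup: agents $[n]$, chores $[m]$, allocations $\mathbf z\in\mathbb R^{n\times m}_{\ge0}$ with column sums $1$, $u_i(\mathbf z_i)=\sum_jv_{i,j}z_{i,j}$. $\mathcal U^*(\mathbf v)$ is the set of utility profiles $\mathbf u(\mathbf z)$ of Pareto optimal allocations $\mathbf z$. Consumption graph $G_{\mathbf z}$: edge $(i,j)$ iff $z_{i,j}>0$. $G_\tau(\mathbf v)$ for $\tau\in\mathbb R^n_{>0}$: edge $(i,j)$ iff $\tau_i|v_{i,j}|\le\tau_{i'}|v_{i',j}|$ for all $i'$; $\mathrm{MWW}(\mathbf v)=\{G_\tau(\mathbf v):\tau\in\mathbb R^n_{>0}\}$. Competitive allocation for budgets $\mathbf b\in\mathbb R^n_{<0}$: there exist prices $\mathbf p\in\mathbb R^m_{<0}$ such that each $\mathbf z_i$ maximizes $u_i$ over bundles $\mathbf x\in\mathbb R^m_{\ge0}$ with $\sum_jp_jx_j\le b_i$; $\mathrm{CU}(\mathbf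 v,\mathbf b)$ is the set of their utility profiles. *)

(* Reals are modelled by an arbitrary real closed field R
   (the statement is first-order for fixed n, m, so this is a faithful
   generalization of the statement over the reals). *)
From HB Require Import structures.
From mathcomp Require Import all_boot all_order all_algebra.
Set Implicit Arguments. Unset Strict Implicit. Unset Printing Implicit Defensive.
Import Order.TTheory GRing.Theory Num.Theory.
Local Open Scope ring_scope.

Section Defs.
Variables (R : rcfType) (n m : nat).

Definition is_alloc (z : 'M[R]_(n, m)) : Prop :=
  (forall i j, 0 <= z i j) /\ (forall j, \sum_(i < n) z i j = 1).

Definition util (v z : 'M[R]_(n, m)) : {ffun 'I_n -> R} :=
  [ffun i => \sum_(j < m) v i j * z i j].

Definition pareto_opt (v z : 'M[R]_(n, m)) : Prop :=
  is_alloc z /\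
  ~ (exists z', is_alloc z' /\ (forall i, util v z i <= util v z' i) /\
                 (exists i, util v z i < util v z' i)).

Definition in_Ustar (v : 'M[R]_(n, m)) (u : {ffun 'I_n -> R}) : Prop :=
  exists z, pareto_opt v z /\ util v z = u.

Definition cons_graph (z : 'M[R]_(n, m)) : {set 'I_n * 'I_m} :=
  [set e | 0 < z e.1 e.2].

Definition G_tau (v : 'M[R]_(n, m)) (tau : 'I_n -> R) : {set 'I_n * 'I_m} :=
  [set e | [forall i' : 'I_n,
             tau e.1 * `|v e.1 e.2| <= tau i' * `|v i' e.2|]].

Definition in_MWW (v : 'M[R]_(n, m)) (G : {set 'I_n * 'I_m}) : Prop :=
  exists tau : 'I_n -> R, (forall i, 0 < tau i) /\ G = G_tau v tau.

Definition competitive (v : 'M[R]_(n, m)) (b : 'I_n -> R) (z : 'M[R]_(n, m))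
  : Prop :=
  is_alloc z /\
  exists p : 'I_m -> R, (forall j, p j < 0) /\
    forall i,
      (\sum_(j < m) p j * z i j <= b i) /\
      (forall x : 'I_m -> R, (forall j, 0 <= x j) ->
         \sum_(j < m) p j * x j <= b i ->
         \sum_(j < m) v i j * x j <= util v z i).

Definition in_CU (v : 'M[R]_(n, m)) (b : 'I_n -> R) (u : {ffun 'I_n -> R})
  : Prop :=
  exists z, competitive v b z /\ util v z = u.

End Defs.

(* Part 1.  Given a Pareto optimal profile, first choose an allocation z with
   this profile whose support is maximal (averaging allocations with the same
   profile unites their supports).  To find weights tau with G_z = G_tau we
   study exchanges along alternating paths: an agent hands a chore it holds to
   another one, who passes the resulting loss on, and so on.  Pareto
   optimality forces every alternating cycle to have ratio
   prod a_yj / a_xj >= 1, and maximality of the support forces the cycles of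
   ratio exactly 1 to stay inside G_z.  For each target agent t, the least
   cost of a simple alternating path (with a large penalty for not ending at
   t) is a potential satisfying the edge inequalities of G_tau on G_z and
   strictly violating them at the non-edges of chores consumed by t; summing
   the potentials over all t gives tau.

   Part 2.  A competitive allocation is Pareto optimal (first welfare
   theorem); the MWW allocation of Part 1 with the same profile has the same
   total earnings and no agent overspends, so it is competitive at the same
   prices. *)
From HB Require Import structures.
From mathcomp Require Import all_boot all_order all_algebra.
Import Order.TTheory GRing.Theory Num.Theory.
Local Open Scope ring_scope.
From mathcomp Require Import ring lra.
From Stdlib Require Import Classical.
Set Implicit Arguments. Unset Strict Implicit. Unset Printing Implicit Defensive.

Lemma bigmin_attained (disp : Order.disp_t) (T : orderType disp) (I : Type)
    (r : seq I) (P : pred I) (F : I -> T) (x0 : T) :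
  \big[Order.min/x0]_(i <- r | P i) F i = x0 \/
  exists2 i, P i & \big[Order.min/x0]_(i <- r | P i) F i = F i.
Proof.
elim: r => [|i r IH]; first by left; rewrite big_nil.
rewrite big_cons; case: ifP => // Pi.
rewrite /Order.min; case: ifP => _; first by right; exists i.
exact: IH.
Qed.

(* All sequences of length at most k over a finite type, so that minima over
   bounded paths are finite minima. *)
Fixpoint bounded_seqs (T : finType) (k : nat) : seq (seq T) :=
  if k is k'.+1 then [::] :: [seq t :: s | t <- enum T, s <- bounded_seqs T k']
  else [:: [::]].

Lemma mem_bounded_seqs (T : finType) k (s : seq T) :
  (size s <= k)%N -> s \in bounded_seqs T k.
Proof.
elim: k s => [|k IH] [|t s] //= hs; rewrite in_cons; apply/orP; right.
by apply: (allpairs_f (fun t s => t :: s)); rewrite ?mem_enum ?IH.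
Qed.

(* A path from agent x is a list of steps
   (y, j); along the step the current agent hands part of a chore j it holds
   in z to agent y.  Starting with a utility gain g for x, each step passes on
   a utility loss scaled by a_yj / a_xj, so the end agent loses g times the
   product of these ratios and nobody else is affected. *)
Section Transfer.
Variables (R : rcfType) (n m : nat) (v z : 'M[R]_(n, m)).
Hypothesis v_neg : forall i j, v i j < 0.

Local Notation a i j := `|v i j|.

Lemma disut_gt0 i j : 0 < a i j.
Proof. by rewrite normr_gt0 lt_eqF ?v_neg. Qed.

Lemma v_disut i j : v i j = - a i j.
Proof. by rewrite ler0_norm ?opprK // ltW. Qed.

Fixpoint alt_path (x : 'I_n) (s : seq ('I_n * 'I_m)) : bool :=
  if s is (y, j) :: s' then (0 < z x j) && alt_path y s' else true.

Fixpoint path_ratio (x : 'I_n) (s : seq ('I_n * 'I_m)) : R :=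
  if s is (y, j) :: s' then a y j / a x j * path_ratio y s' else 1.

Definition path_end (x : 'I_n) (s : seq ('I_n * 'I_m)) : 'I_n :=
  last x (map fst s).

Fixpoint transfer (x : 'I_n) (g : R) (s : seq ('I_n * 'I_m)) : 'M[R]_(n, m) :=
  if s is (y, j) :: s' then
    (g / a x j) *: (delta_mx y j - delta_mx x j) + transfer y (g / a x j * a y j) s'
  else 0.

Lemma path_ratio_gt0 x s : 0 < path_ratio x s.
Proof.
elim: s x => [|[y j] s IH] x //=.
by rewrite mulr_gt0 // divr_gt0 // disut_gt0.
Qed.

Lemma alt_path_cat x s1 s2 :
  alt_path x (s1 ++ s2) = alt_path x s1 && alt_path (path_end x s1) s2.
Proof. by elim: s1 x => [|[y j] s1 IH] x //=; rewrite IH andbA. Qed.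

Lemma path_ratio_cat x s1 s2 :
  path_ratio x (s1 ++ s2) = path_ratio x s1 * path_ratio (path_end x s1) s2.
Proof. by elim: s1 x => [|[y j] s1 IH] x /=; rewrite ?mul1r // IH mulrA. Qed.

Lemma path_end_cat x s1 s2 :
  path_end x (s1 ++ s2) = path_end (path_end x s1) s2.
Proof. by rewrite /path_end map_cat last_cat. Qed.

Lemma path_split_at x y (s : seq ('I_n * 'I_m)) : x \in map fst s ->
  exists s1 s2, s = s1 ++ s2 /\ path_end y s1 = x.
Proof.
elim: s y => [|[y' j'] s IH] y //=; rewrite in_cons => /orP [/eqP ->| hx].
  by exists [:: (y', j')], s.
have [s1 [s2 [-> hl]]] := IH y' hx.
by exists ((y', j') :: s1), s2.
Qed.

Lemma sum_row_delta (F : 'I_m -> R) (i y : 'I_n) (j : 'I_m) :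
  \sum_(k < m) F k * ((i == y) && (k == j))%:R = F j * (i == y)%:R.
Proof.
rewrite (bigD1 j) //= eqxx andbT big1 ?addr0 // => k /negbTE ->.
by rewrite andbF mulr0.
Qed.

Lemma sum_indicator (y : 'I_n) : \sum_(i < n) (i == y)%:R = 1 :> R.
Proof. by rewrite (bigD1 y) //= eqxx big1 ?addr0 // => i /negbTE ->. Qed.

Lemma util_transfer s x g i :
  \sum_(k < m) v i k * transfer x g s i k =
  g * (i == x)%:R - g * path_ratio x s * (i == path_end x s)%:R.
Proof.
elim: s x g => [|[y j] s IH] x g /=.
  by rewrite /path_end /= big1 ?mulr1 ?subrr // => k _; rewrite mxE mulr0.
have -> : \sum_(k < m) v i k * ((g / a x j) *: (delta_mx y j - delta_mx x j)
             + transfer y (g / a x j * a y j) s) i k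
   = (g / a x j) * (v i j * (i == y)%:R - v i j * (i == x)%:R)
     + \sum_(k < m) v i k * transfer y (g / a x j * a y j) s i k.
  rewrite -sum_row_delta -sum_row_delta -sumrB mulr_sumr -big_split /=.
  by apply: eq_bigr => k _; rewrite !mxE; ring.
have vy : v i j * (i == y)%:R = - a y j * (i == y)%:R.
  by case: (eqVneq i y) => [->|_]; [rewrite {1}v_disut | rewrite !mulr0].
have vx : v i j * (i == x)%:R = - a x j * (i == x)%:R.
  by case: (eqVneq i x) => [->|_]; [rewrite {1}v_disut | rewrite !mulr0].
rewrite IH /path_end /= vy vx.
have ax0 : a x j != 0 by rewrite lt0r_neq0 // disut_gt0.
by field.
Qed.

Lemma transfer_colsum s x g j : \sum_(i < n) transfer x g s i j = 0.
Proof.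
elim: s x g => [|[y k] s IH] x g /=; first by rewrite big1 // => i _; rewrite mxE.
under eq_bigr => i _ do rewrite !mxE.
rewrite big_split /= IH addr0 -mulr_sumr sumrB; clear IH.
case: (eqVneq j k) => [<-|_]; last first.
  by rewrite !big1 ?subrr ?mulr0 // => i _; rewrite andbF.
under eq_bigr => i _ do rewrite andbT.
under [X in _ - X]eq_bigr => i _ do rewrite andbT.
by rewrite !sum_indicator subrr mulr0.
Qed.

Lemma transfer_neg_supp s x g i j : 0 < g -> alt_path x s ->
  transfer x g s i j < 0 -> 0 < z i j.
Proof.
elim: s x g => [|[y k] s IH] x g g_gt0 /=; first by rewrite mxE ltxx.
move=> /andP [hx hs]; rewrite !mxE.
have step_gt0 : 0 < g / a x k by rewrite divr_gt0 // disut_gt0.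
case xk : ((i == x) && (j == k)); first by case/andP: xk => /eqP -> /eqP -> _.
rewrite subr0 => hneg; apply: (IH y (g / a x k * a y k)) => //.
  by rewrite mulr_gt0 // disut_gt0.
rewrite ltNge; apply/negP => hge; move: hneg; rewrite ltNge => /negP; apply.
by rewrite addr_ge0 // mulr_ge0 ?ler0n // ltW.
Qed.

Lemma transfer_first_step s x g y j : 0 < g -> alt_path x ((y, j) :: s) ->
  ~ 0 < z y j -> 0 < transfer x g ((y, j) :: s) y j.
Proof.
move=> g_gt0 /= /andP [hx hs] hy; rewrite !mxE !eqxx /=.
have nyx : y != x by apply/eqP => e; apply: hy; rewrite e.
rewrite (negbTE nyx) subr0 mulr1.
have step_gt0 : 0 < g / a x j by rewrite divr_gt0 // disut_gt0.
rewrite ltr_wpDr //; rewrite leNgt; apply/negP => hneg; apply: hy.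
apply: (transfer_neg_supp (g := g / a x j * a y j) _ hs hneg).
by rewrite mulr_gt0 // disut_gt0.
Qed.

Definition min_ratio : R :=
  \big[Order.min/1]_(t : 'I_n * 'I_n * 'I_m) (a t.1.2 t.2 / a t.1.1 t.2).

Lemma min_ratio_gt0 : 0 < min_ratio.
Proof. by apply: lt_bigmin => // t _; rewrite divr_gt0 ?disut_gt0. Qed.

Lemma min_ratio_le1 : min_ratio <= 1.
Proof. exact: bigmin_le_id. Qed.

Lemma path_ratio_ge x s : min_ratio ^+ size s <= path_ratio x s.
Proof.
elim: s x => [|[y j] s IH] x /=; first by rewrite expr0.
rewrite exprS; apply: ler_pM; rewrite ?exprn_ge0 ?IH ?(ltW min_ratio_gt0) //.
exact: (bigmin_le _ (x, y, j)).
Qed.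

Hypothesis z_alloc : is_alloc z.

(* Exchanging a small enough positive amount along an alternating path keeps
   an allocation; the initial gain c is the largest step keeping entries
   nonnegative (capped at 1). *)
Lemma path_exchange x s : alt_path x s ->
  exists2 c, 0 < c & exists w, is_alloc w /\
   (forall i, util v w i = util v z i + c * (i == x)%:R
                           - c * path_ratio x s * (i == path_end x s)%:R) /\
   (forall y j s', s = (y, j) :: s' -> ~ 0 < z y j -> 0 < w y j).
Proof.
move=> hs; set d := transfer x 1 s.
set c := \big[Order.min/1]_(e : 'I_n * 'I_m | d e.1 e.2 < 0) (z e.1 e.2 / - d e.1 e.2).
have c_gt0 : 0 < c.
  apply: lt_bigmin => // -[i j] /= hd; rewrite divr_gt0 ?oppr_gt0 //.
  exact: (transfer_neg_supp (g := 1) _ hs hd).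
have [z_ge0 z_sum] := z_alloc.
exists c => //; exists (z + c *: d); split; [split|split].
- move=> i j; rewrite !mxE; case: (ltP (d i j) 0) => hd; last first.
    by rewrite addr_ge0 // mulr_ge0 // ltW.
  have : c <= z i j / - d i j by apply: (bigmin_le_cond _ (j := (i, j))).
  by rewrite ler_pdivlMr ?oppr_gt0 // mulrN; lra.
- move=> j; under eq_bigr => i _ do rewrite !mxE.
  by rewrite big_split /= z_sum -mulr_sumr transfer_colsum mulr0 addr0.
- move=> i; rewrite !ffunE.
  under eq_bigr => j _ do rewrite !mxE mulrDr.
  rewrite big_split /= -addrA; congr (_ + _).
  under eq_bigr => j _ do rewrite mulrCA.
  by rewrite -mulr_sumr util_transfer; ring.
- move=> y j s' e hy; rewrite !mxE.
  have hs' : alt_path x ((y, j) :: s') by rewrite -e.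
  have := transfer_first_step ltr01 hs' hy; rewrite /d e => hd.
  by rewrite ltr_wpDl ?z_ge0 // mulr_gt0.
Qed.

Hypothesis z_no_improvement : forall w, is_alloc w ->
  (forall i, util v z i <= util v w i) -> forall i, util v w i <= util v z i.
Hypothesis z_max_support : forall w, is_alloc w -> util v w = util v z ->
  forall i j, 0 < w i j -> 0 < z i j.

(* an alternating cycle with ratio below 1 would be a Pareto improvement *)
Lemma cycle_ratio_ge1 x s : alt_path x s -> path_end x s = x -> 1 <= path_ratio x s.
Proof.
move=> hs hend; have [c c_gt0 [w [hw [hu _]]]] := path_exchange hs.
rewrite leNgt; apply/negP => hlt.
have gain i : util v w i = util v z i + c * (1 - path_ratio x s) * (i == x)%:R.
  by rewrite hu hend; ring.
have hge i : util v z i <= util v w i.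
  by rewrite gain lerDl !mulr_ge0 ?ler0n ?subr_ge0 ?(ltW c_gt0) ?(ltW hlt).
have := z_no_improvement hw hge x; rewrite gain eqxx mulr1 gerDl leNgt.
by rewrite mulr_gt0 // subr_gt0.
Qed.

Lemma tight_cycle_in_support x y j s :
  alt_path x ((y, j) :: s) -> path_end x ((y, j) :: s) = x ->
  path_ratio x ((y, j) :: s) <= 1 -> 0 < z y j.
Proof.
move=> hs hend hle; have [c c_gt0 [w [hw [hu hfirst]]]] := path_exchange hs.
have ratio1 : path_ratio x ((y, j) :: s) = 1.
  by apply/eqP; rewrite eq_le hle cycle_ratio_ge1.
have same_util : util v w = util v z.
  by apply/ffunP => i; rewrite hu hend ratio1 mulr1 addrK.
case: (ltP 0 (z y j)) => // zyj_le0.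
have zyj_npos : ~ 0 < z y j by rewrite ltNge zyj_le0.
by have := z_max_support hw same_util (hfirst y j s erefl zyj_npos); rewrite ltNge zyj_le0.
Qed.

Definition simple_path x s := alt_path x s && uniq (x :: map fst s).

Lemma simple_path_size x s : simple_path x s -> (size s <= n)%N.
Proof.
case/andP => _ /card_uniqP /= card_s.
have := max_card (mem (x :: map fst s)).
by rewrite card_s card_ord /= size_map => /ltnW.
Qed.

Variable t : 'I_n.

(* the penalty times the ratio of any path of length <= n+1 is at least 2 *)
Definition penalty : R := 2 / min_ratio ^+ n.+1.
Definition end_weight (y : 'I_n) : R := if y == t then 1 else penalty.
Definition path_cost x s : R := path_ratio x s * end_weight (path_end x s).

Definition potential x : R :=
  \big[Order.min/path_cost x [::]]_(s <- bounded_seqs _ n | simple_path x s)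
     path_cost x s.

Lemma path_cost_gt0 x s : 0 < path_cost x s.
Proof.
rewrite mulr_gt0 ?path_ratio_gt0 // /end_weight; case: ifP => // _.
by rewrite divr_gt0 // exprn_gt0 // min_ratio_gt0.
Qed.

Lemma potential_le x s : simple_path x s -> potential x <= path_cost x s.
Proof.
by move=> hs; apply: ge_bigmin_seq (hs); apply: mem_bounded_seqs (simple_path_size hs).
Qed.

Lemma potential_attained x : exists2 s, simple_path x s & potential x = path_cost x s.
Proof.
rewrite /potential.
case: (bigmin_attained (bounded_seqs _ n) (simple_path x) (path_cost x) (path_cost x [::]))
  => [->|[s hs ->]]; last by exists s.
by exists [::].
Qed.

Lemma potential_gt0 x : 0 < potential x.
Proof. by have [s _ ->] := potential_attained x; apply: path_cost_gt0. Qed.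

Lemma potential_extend x y j p : 0 < z x j -> simple_path y p ->
  x \notin y :: map fst p -> potential x * a x j <= path_cost y p * a y j.
Proof.
move=> hxj /andP [hp hu] hx.
have hsimple : simple_path x ((y, j) :: p) by rewrite /simple_path /= hxj hp hx.
have cost_step : path_cost x ((y, j) :: p) = path_cost y p * a y j / a x j.
  by rewrite /path_cost /path_end /=; ring.
by have := potential_le hsimple; rewrite cost_step ler_pdivlMr ?disut_gt0.
Qed.

(* If a simple path from y passes through x, close the cycle x -> y -> ... -> x:
   its ratio is at least 1, so the remaining suffix from x is no worse. *)
Lemma potential_shortcut x y j p : 0 < z x j -> simple_path y p ->
  x != y -> x \in map fst p -> potential x * a x j <= path_cost y p * a y j.
Proof.
move=> hxj hp nxy hx; have [p1 [p2 [ep hend]]] := path_split_at y hx.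
move: hp; rewrite /simple_path ep alt_path_cat map_cat.
move=> /andP [/andP [hp1 hp2] /= /andP [_ hu]].
have cycle_ge1 : 1 <= path_ratio x ((y, j) :: p1).
  by apply: cycle_ratio_ge1; rewrite /= ?hxj ?hp1.
have hxj_le : a x j <= a y j * path_ratio y p1.
  by move: cycle_ge1; rewrite /= mulrAC ler_pdivlMr ?disut_gt0 // mul1r.
have x_in_p1 : x \in map fst p1.
  have := mem_last y (map fst p1); rewrite -/(path_end y p1) hend in_cons.
  by rewrite (negbTE nxy).
have hp2_simple : simple_path x p2.
  rewrite /simple_path -hend hp2 /= hend.
  move: hu; rewrite cat_uniq => /and3P [_ disj ->]; rewrite andbT.
  by apply: contra disj => x_in_p2; apply/hasP; exists x.
have -> : path_cost y (p1 ++ p2) = path_ratio y p1 * path_cost x p2.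
  by rewrite /path_cost path_ratio_cat path_end_cat hend mulrA.
have := potential_le hp2_simple; have := potential_gt0 x.
have := path_ratio_gt0 y p1; have := disut_gt0 x j; nra.
Qed.

Lemma potential_edge x y j : 0 < z x j -> potential x * a x j <= potential y * a y j.
Proof.
move=> hxj; have [p hp ->] := potential_attained y.
case: (eqVneq x y) => [exy|nxy].
  by rewrite exy; apply: ler_wpM2r; [exact: ltW (disut_gt0 _ _) | exact: potential_le].
case hx : (x \in map fst p); first exact: potential_shortcut.
by apply: potential_extend; rewrite // in_cons negb_or nxy hx.
Qed.

Lemma potential_target_le1 : potential t <= 1.
Proof. by have := @potential_le t [::] erefl; rewrite /path_cost /end_weight /= eqxx mulr1. Qed.

(* Potentials separate the non-edges at chores consumed by the target: a path
   back to t would close a cycle of ratio > 1 (ratio 1 is excluded by maximal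
   support), and a path ending elsewhere pays the penalty. *)
Lemma potential_strict j y : 0 < z t j -> ~ 0 < z y j ->
  potential t * a t j < potential y * a y j.
Proof.
move=> htj hyj; have [p hp ->] := potential_attained y.
have [at_gt0 ay_gt0] := (disut_gt0 t j, disut_gt0 y j).
have hpath : alt_path t ((y, j) :: p) by move: hp; rewrite /= htj => /andP [].
have ratio_step : a y j * path_ratio y p = a t j * path_ratio t ((y, j) :: p).
  by rewrite /= mulrCA mulrA mulfVK // lt0r_neq0.
case: (eqVneq (path_end y p) t) => hend.
  have ratio_gt1 : 1 < path_ratio t ((y, j) :: p).
    rewrite ltNge; apply/negP => hle; apply: hyj.
    exact: tight_cycle_in_support hpath hend hle.
  rewrite /path_cost hend /end_weight eqxx mulr1 [X in _ < X]mulrC ratio_step.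
  by have := potential_target_le1; nra.
have lhs_lt : potential t * a t j < 2 * a t j.
  by have := potential_target_le1; have := potential_gt0 t; nra.
have rho_pos := exprn_gt0 n.+1 min_ratio_gt0.
have long_ratio : min_ratio ^+ n.+1 <= path_ratio t ((y, j) :: p).
  apply: le_trans (path_ratio_ge t _).
  apply: ler_wiXn2l; rewrite ?(ltW min_ratio_gt0) ?min_ratio_le1 //.
  exact: (simple_path_size hp).
have penalty_prod : min_ratio ^+ n.+1 * penalty = 2.
  by rewrite /penalty mulrCA divff ?mulr1 // lt0r_neq0.
rewrite /path_cost /end_weight (negbTE hend) mulrAC [_ * a y j]mulrC ratio_step.
apply: lt_le_trans lhs_lt _; rewrite -penalty_prod mulrC -mulrA.
apply: ler_wpM2l; first exact: ltW.
by apply: ler_wpM2r; rewrite // ltW // divr_gt0.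
Qed.

End Transfer.

(* An allocation without Pareto improvement and of maximal support for its
   utility profile has an MWW consumption graph: take as weights the sums of
   the potentials for all possible targets. *)
Lemma max_support_mww (R : rcfType) (n m : nat) (v z : 'M[R]_(n, m))
  (v_neg : forall i j, v i j < 0) (z_alloc : is_alloc z)
  (z_no_improvement : forall w, is_alloc w ->
     (forall i, util v z i <= util v w i) -> forall i, util v w i <= util v z i)
  (z_max_support : forall w, is_alloc w -> util v w = util v z ->
     forall i j, 0 < w i j -> 0 < z i j) :
  in_MWW v (cons_graph z).
Proof.
pose tau i := \sum_(t < n) potential v z t i.
have edge_le x y j : 0 < z x j -> tau x * `|v x j| <= tau y * `|v y j|.
  move=> hxj; rewrite !mulr_suml; apply: ler_sum => t _.
  exact: potential_edge.
exists tau; split.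
  move=> i; rewrite /tau (bigD1 i) //=; apply: ltr_pwDl; first exact: potential_gt0.
  by apply: sumr_ge0 => t _; apply: ltW; apply: potential_gt0.
apply/setP => -[i j]; rewrite !inE /=; apply/idP/forallP => [hij i'|hmin].
  exact: edge_le.
case: (ltP 0 (z i j)) => // hle.
have [t ht] : exists t, 0 < z t j.
  case: (pickP (fun t => 0 < z t j)) => [t ht|none]; first by exists t.
  have := z_alloc.2 j; have : \sum_(k < n) z k j <= 0.
    by apply: sumr_le0 => k _; rewrite leNgt none.
  lra.
have hnz : ~ 0 < z i j by rewrite ltNge hle.
have : tau t * `|v t j| < tau i * `|v i j|.
  rewrite /tau !mulr_suml (bigD1 t) //= [X in _ < X](bigD1 t) //=.
  apply: ltr_leD; first exact: potential_strict.
  by apply: ler_sum => k _; apply: potential_edge.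
by rewrite ltNge hmin.
Qed.

Section MaximalSupport.
Variables (R : rcfType) (n m : nat) (v : 'M[R]_(n, m)).

Definition midpoint (z w : 'M[R]_(n, m)) : 'M[R]_(n, m) := 2^-1 *: (z + w).

Lemma midpoint_alloc z w : is_alloc z -> is_alloc w -> is_alloc (midpoint z w).
Proof.
move=> [z_ge0 z_sum] [w_ge0 w_sum]; split => [i j|j].
  by rewrite !mxE mulr_ge0 ?addr_ge0 ?invr_ge0 ?ler0n.
under eq_bigr => i _ do rewrite !mxE.
by rewrite -mulr_sumr big_split /= z_sum w_sum; field.
Qed.

Lemma util_midpoint z w i :
  util v (midpoint z w) i = 2^-1 * (util v z i + util v w i).
Proof.
rewrite !ffunE -big_split mulr_sumr /=; apply: eq_bigr => j _.
by rewrite !mxE; ring.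
Qed.

Lemma midpoint_support z w i j : is_alloc z -> is_alloc w ->
  0 < z i j \/ 0 < w i j -> 0 < midpoint z w i j.
Proof.
move=> [z_ge0 _] [w_ge0 _] hpos; rewrite !mxE mulr_gt0 ?invr_gt0 ?ltr0n //.
by have := z_ge0 i j; have := w_ge0 i j; case: hpos; lra.
Qed.

(* Every utility profile of an allocation is realised by an allocation whose
   support contains that of every other allocation with the same profile:
   average in, entry by entry, an allocation using that entry if one exists. *)
Lemma max_support_alloc z0 : is_alloc z0 ->
  exists z, [/\ is_alloc z, util v z = util v z0 &
    forall w, is_alloc w -> util v w = util v z0 ->
      forall i j, 0 < w i j -> 0 < z i j].
Proof.
move=> z0_alloc.
suff [z [hz hzu hsupp]] : exists z, [/\ is_alloc z, util v z = util v z0 &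
    forall e, e \in enum {: 'I_n * 'I_m} -> forall w, is_alloc w ->
      util v w = util v z0 -> 0 < w e.1 e.2 -> 0 < z e.1 e.2].
  by exists z; split => // w hw hwu i j; apply: (hsupp (i, j)); rewrite ?mem_enum.
elim: (enum _) => [|e E [z [hz hzu hsupp]]]; first by exists z0.
case: (classic (exists w, [/\ is_alloc w, util v w = util v z0 & 0 < w e.1 e.2])).
  move=> [w [hw hwu hwe]]; exists (midpoint z w); split.
  - exact: midpoint_alloc.
  - by apply/ffunP => i; rewrite util_midpoint hzu hwu; field.
  move=> e'; rewrite in_cons => /orP [/eqP -> | he'] w' hw' hw'u hw'e.
    by apply: midpoint_support => //; right.
  by apply: midpoint_support => //; left; apply: (hsupp e' he' w').
move=> none; exists z; split => // e'; rewrite in_cons => /orP [/eqP -> | he'].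
  by move=> w hw hwu hwe; exfalso; apply: none; exists w.
exact: hsupp.
Qed.

End MaximalSupport.

Lemma pareto_profile_mww (R : rcfType) (n m : nat) (v : 'M[R]_(n, m))
  (v_neg : forall i j, v i j < 0) (u : {ffun 'I_n -> R}) :
  in_Ustar v u -> exists z, is_alloc z /\ util v z = u /\ in_MWW v (cons_graph z).
Proof.
case=> z0 [[z0_alloc z0_po] <-].
have [z [z_alloc z_util z_max]] := max_support_alloc v z0_alloc.
exists z; split => //; split => //; apply: max_support_mww; rewrite ?z_util //.
move=> w w_alloc w_ge i; rewrite leNgt; apply/negP => w_gt; apply: z0_po.
by exists w; split => //; split; [exact: w_ge | exists i].
Qed.

Section Competitive.
Variables (R : rcfType) (n m : nat) (v : 'M[R]_(n, m)) (b : 'I_n -> R).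
Variables (z : 'M[R]_(n, m)) (p : 'I_m -> R).
Hypothesis v_neg : forall i j, v i j < 0.
Hypothesis b_neg : forall i, b i < 0.
Hypothesis z_alloc : is_alloc z.
Hypothesis p_neg : forall j, p j < 0.
Hypothesis z_demand : forall i,
  (\sum_(j < m) p j * z i j <= b i) /\
  (forall x : 'I_m -> R, (forall j, 0 <= x j) ->
     \sum_(j < m) p j * x j <= b i -> \sum_(j < m) v i j * x j <= util v z i).

Definition earnings (y : 'I_m -> R) : R := - \sum_(j < m) p j * y j.

Lemma earnings_ge0 y : (forall j, 0 <= y j) -> 0 <= earnings y.
Proof.
by move=> y_ge0; rewrite oppr_ge0; apply: sumr_le0 => j _; rewrite nmulr_rle0.
Qed.

Lemma total_earnings (w : 'M[R]_(n, m)) : is_alloc w ->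
  \sum_(i < n) earnings (fun j => w i j) = - \sum_(j < m) p j.
Proof.
move=> w_alloc; rewrite /earnings sumrN exchange_big /=; congr (- _).
by apply: eq_bigr => j _; rewrite -mulr_sumr w_alloc.2 mulr1.
Qed.

Lemma budget_le_earnings i : - b i <= earnings (fun j => z i j).
Proof. by rewrite /earnings lerN2; case: (z_demand i). Qed.

(* the demanded bundle spends part of a negative budget, so it is nonzero *)
Lemma util_lt0 i : util v z i < 0.
Proof.
have [j zij_gt0] : exists j, 0 < z i j.
  case: (pickP (fun j => 0 < z i j)) => [j hj|none]; first by exists j.
  have : \sum_(j < m) p j * z i j = 0.
    apply: big1 => j _; have := z_alloc.1 i j.
    by rewrite le_eqVlt none orbF => /eqP <-; rewrite mulr0.
  by have := b_neg i; case: (z_demand i); lra.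
rewrite ffunE (bigD1 j) //=.
have : v i j * z i j < 0 by rewrite nmulr_rlt0.
have : \sum_(k < m | k != j) v i k * z i k <= 0.
  by apply: sumr_le0 => k _; rewrite nmulr_rle0 // z_alloc.1.
lra.
Qed.

(* Utility per unit of earnings is at most u_i / (-b_i): rescaling a bundle y
   to earn exactly -b_i makes it affordable, hence no better than z_i. *)
Lemma util_earnings_bound i (y : 'I_m -> R) : (forall j, 0 <= y j) ->
  - b i * (\sum_(j < m) v i j * y j) <= util v z i * earnings y.
Proof.
move=> y_ge0; have bi_neg := b_neg i; have e_ge0 := earnings_ge0 y_ge0.
have vy_le0 : \sum_(j < m) v i j * y j <= 0.
  by apply: sumr_le0 => j _; rewrite nmulr_rle0.
have [e0|e_neq0] := eqVneq (earnings y) 0.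
  by rewrite e0 mulr0; nra.
have e_gt0 : 0 < earnings y by rewrite lt0r e_neq0.
pose x j := - b i / earnings y * y j.
have x_ge0 j : 0 <= x j by rewrite mulr_ge0 // divr_ge0 // oppr_ge0 ltW.
have x_affordable : \sum_(j < m) p j * x j <= b i.
  have -> : \sum_(j < m) p j * x j = - b i / earnings y * - earnings y.
    by rewrite /earnings opprK mulr_sumr; apply: eq_bigr => j _; rewrite /x; ring.
  by rewrite mulrN mulfVK ?opprK // lt0r_neq0.
have := (z_demand i).2 x x_ge0 x_affordable.
have -> : \sum_(j < m) v i j * x j = - b i / earnings y * \sum_(j < m) v i j * y j.
  by rewrite mulr_sumr; apply: eq_bigr => j _; rewrite /x; ring.
by rewrite mulrAC ler_pdivrMr.
Qed.

Lemma earnings_le_budget (w : 'M[R]_(n, m)) i : is_alloc w ->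
  util v z i <= util v w i -> earnings (fun j => w i j) <= - b i.
Proof.
move=> w_alloc; rewrite [util v w i]ffunE => hle.
have := util_earnings_bound i (fun j => w_alloc.1 i j).
have := earnings_ge0 (fun j => w_alloc.1 i j).
by have := util_lt0 i; have := b_neg i; nra.
Qed.

Lemma earnings_lt_budget (w : 'M[R]_(n, m)) i : is_alloc w ->
  util v z i < util v w i -> earnings (fun j => w i j) < - b i.
Proof.
move=> w_alloc; rewrite [util v w i]ffunE => hlt.
have := util_earnings_bound i (fun j => w_alloc.1 i j).
have := earnings_ge0 (fun j => w_alloc.1 i j).
by have := util_lt0 i; have := b_neg i; nra.
Qed.

(* First welfare theorem: a Pareto improvement would have to earn strictly
   less in total than z does, but total earnings are fixed. *)
Lemma competitive_pareto_opt : pareto_opt v z.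
Proof.
split => //; case=> w [w_alloc [w_ge [k w_gt]]].
have : \sum_(i < n) earnings (fun j => w i j) < \sum_(i < n) - b i.
  rewrite (bigD1 k) //= [X in _ < X](bigD1 k) //=.
  apply: ltr_leD; first exact: earnings_lt_budget.
  by apply: ler_sum => i _; apply: earnings_le_budget.
have : \sum_(i < n) - b i <= \sum_(i < n) earnings (fun j => z i j).
  by apply: ler_sum => i _; apply: budget_le_earnings.
by rewrite !total_earnings //; lra.
Qed.

(* An allocation with the same utility profile as z is again affordable at
   prices p: every agent earns at most her budget, while the total equals the
   total of budgets, so every agent exactly meets her budget. *)
Lemma same_util_affordable (w : 'M[R]_(n, m)) : is_alloc w ->
  util v w = util v z -> forall i, \sum_(j < m) p j * w i j <= b i.
Proof.
move=> w_alloc w_util.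
have slack_ge0 i : 0 <= - b i - earnings (fun j => w i j).
  by rewrite subr_ge0 earnings_le_budget // w_util.
have slack_sum : \sum_(i < n) (- b i - earnings (fun j => w i j)) = 0.
  apply/eqP; rewrite eq_le sumr_ge0 // andbT sumrB subr_le0 total_earnings //.
  rewrite -(total_earnings z_alloc); apply: ler_sum => i _.
  exact: budget_le_earnings.
move=> i; have := psumr_eq0P (fun i _ => slack_ge0 i) slack_sum (i := i) erefl.
by rewrite /earnings => h; lra.
Qed.

Lemma same_util_competitive (w : 'M[R]_(n, m)) : is_alloc w ->
  util v w = util v z -> competitive v b w.
Proof.
move=> w_alloc w_util; split => //; exists p; split => // i; split.
  exact: same_util_affordable.
by rewrite w_util; apply: (z_demand i).2.
Qed.

End Competitive.

Lemma competitive_profile_mww (R : rcfType) (n m : nat) (v : 'M[R]_(n, m))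
  (v_neg : forall i j, v i j < 0) (b : 'I_n -> R) (b_neg : forall i, b i < 0)
  (u : {ffun 'I_n -> R}) : in_CU v b u ->
  exists z, competitive v b z /\ util v z = u /\ in_MWW v (cons_graph z).
Proof.
case=> z [[z_alloc [p [p_neg z_demand]]] z_util].
have z_po := competitive_pareto_opt v_neg b_neg z_alloc p_neg z_demand.
have [w [w_alloc [w_util w_mww]]] := pareto_profile_mww v_neg (ex_intro _ z (conj z_po z_util)).
exists w; split => //.
by apply: (same_util_competitive v_neg b_neg z_alloc p_neg z_demand) => //; rewrite w_util.
Qed.

Unset Implicit Arguments.

Theorem lemma2 (R : rcfType) (n m : nat) (v : 'M[R]_(n, m))
  (hv : forall i j, v i j < 0) :
  (forall u : {ffun 'I_n -> R}, in_Ustar v u ->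
     exists z, is_alloc z /\ util v z = u /\ in_MWW v (cons_graph z)) /\
  (forall b : 'I_n -> R, (forall i, b i < 0) ->
     forall u : {ffun 'I_n -> R}, in_CU v b u ->
     exists z, competitive v b z /\ util v z = u /\ in_MWW v (cons_graph z)).
Proof.
split=> [u|b hb u]; first exact: pareto_profile_mww.
exact: competitive_profile_mww.
Qed.
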